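(* Let $\lambda$ be an infinite cardinal and $p:[\lambda^+]^2\to\lambda$ a partition. Then there exists a partition $\bar p:[\lambda^+]^2\to\lambda$ with injective fibers such that, for all cardinals $\theta,\chi,\nu,\nu'$ and $i\in\{0,1\}$: if $\mathrm{pr}_i(\lambda^+,\lambda^+,\theta,\chi)_{\bar p}$ holds then $\mathrm{pr}_i(\lambda^+,\lambda^+,\theta,\chi)_{p}$ holds, and if $\mathrm{pr}_i(\lambda^+,\nu\circledast\lambda^+/\nu'\circledast\lambda^+,\theta,\chi)_{\bar p}$ holds then $\mathrm{pr}_i(\lambda^+,\nu\circledast\lambda^+/\nu'\circledast\lambda^+,\theta,\chi)_{p}$ holds.
   Context: $[\kappa]^2$ denotes the set of pairs $(\alpha,\beta)$ with $\alpha<\beta<\kappa$; a partition is any function $p:[\kappa]^2\to\mu$. A partition $p:[\kappa]^2\to\mu$ has injective fibers iff $p(\alpha,\beta)\ne p(\alpha',\beta)$ whenever $\alpha<\alpha'<\beta$. For an ordinal $\sigma$, $[\kappa]^\sigma$ is the set of subsets of $\kappa$ of order type $\sigma$; for $a\in[\kappa]^\sigma$ and $i<\sigma$, $a(i)$ is the $i$-th element of $a$; $a<b$ means every element of $a$ is below every element of $b$; $[\mathcal A]^{\nu'}$ is the set of subfamilies of $\mathcal A$ of cardinality $\nu'$. Given $p:[\kappa]^2\to\mu$, a coloring $c:[\kappa]^2\to\theta$ witnesses: - $\mathrm{pr}_1(\kappa,\kappa,\theta,\chi)_p$ iff for every ordinal $\sigma<\chi$, every pairwise disjoint $\mathcal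 A\subseteq[\kappa]^\sigma$ of size $\kappa$ and every $\tau:\mu\to\theta$ there are $a,b\in\mathcal A$, $a<b$, with $c(\alpha,\beta)=\tau(p(\alpha,\beta))$ for all $\alpha\in a,\beta\in b$; - $\mathrm{pr}_0(\kappa,\kappa,\theta,\chi)_p$ iff for every ordinal $\sigma<\chi$, every pairwise disjoint $\mathcal A\subseteq[\kappa]^\sigma$ of size $\kappa$ and every matrix $(\tau_{i,j})_{i,j<\sigma}$ of functions $\mu\to\theta$ there are $a,b\in\mathcal A$, $a<b$, with $c(a(i),b(j))=\tau_{i,j}(p(a(i),b(j)))$ for all $i,j<\sigma$; - $\mathrm{pr}_1(\kappa,\nu\circledast\kappa/\nu'\circledast\kappa,\theta,\chi)_p$ iff for every ordinal $\sigma<\chi$ and every two families $\mathcal A,\mathcal B\subseteq[\kappa]^\sigma$, each pairwise disjoint, with $|\mathcal A|=\nu$, $|\mathcal B|=\kappa$, there is $\mathcal A'\in[\mathcal A]^{\nu'}$ such that for every $\tau:\mu\to\theta$ there are $a\in\mathcal A'$, $b\in\mathcal B$, $a<b$, with $c(\alpha,\beta)=\tau(p(\alpha,\beta))$ for all $\alpha\in a,\beta\in b$; - $\mathrm{pr}_0(\kappa,\nu\circledast\kappa/\nu'\circledast\kappa,\theta,\chi)_p$: same as the previous item but with ''for every matrix $(\tau_{i,j})_{i,j<\sigma}$ of functions $\mu\to\theta$ there are $a\in\mathcal A'$, $b\in\mathcal B$, $a<b$, with $c(a(i),b(j))=\tau_{i,j}(p(a(i),b(j)))$ for all $i,j<\sigma$''.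 Each principle asserts that a coloring witnessing it exists. *)

(* plain types with Prop-valued relations model cardinals/ordinals. *)
From Stdlib Require Import Classical.

Set Implicit Arguments.

Record well_order (T : Type) (lt : T -> T -> Prop) : Prop := {
  wo_irrefl : forall x, ~ lt x x;
  wo_trans : forall x y z, lt x y -> lt y z -> lt x z;
  wo_total : forall x y, lt x y \/ x = y \/ lt y x;
  wo_wf : well_founded lt
}.

Definition injective_fun (A B : Type) (f : A -> B) : Prop :=
  forall x y, f x = f y -> x = y.

Definition injects (A B : Type) : Prop := exists f : A -> B, injective_fun f.

(* The proper initial segment of (X, ltX) below x0; its order type is an
   ordinal sigma < the order type of (X, ltX). *)
Definition seg (X : Type) (ltX : X -> X -> Prop) (x0 : X) : Type :=
  { x : X | ltX x x0 }.

(* (X, ltX) is an initial ordinal (a cardinal): it does not inject into any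
   proper initial segment of itself. *)
Definition is_initial (X : Type) (ltX : X -> X -> Prop) : Prop :=
  well_order ltX /\ forall x0, ~ injects X (seg ltX x0).

(* (K, ltK) has order type lambda^+ where lambda = |L| is infinite. *)
Definition is_successor_of (L K : Type) (ltK : K -> K -> Prop) : Prop :=
  well_order ltK /\ injects nat L /\
  (forall k0, injects (seg ltK k0) L) /\ ~ injects K L.

Section Principles.
Variables (K : Type) (ltK : K -> K -> Prop) (L : Type)
          (X : Type) (ltX : X -> X -> Prop) (Theta : Type).

(* An element a of [kappa]^sigma (sigma = type of seg ltX x0) is given by its
   increasing enumeration a : seg ltX x0 -> K, a(i) the i-th element. *)
Definition incr (x0 : X) (a : seg ltX x0 -> K) : Prop :=
  forall s t : seg ltX x0, ltX (proj1_sig s) (proj1_sig t) -> ltK (a s) (a t).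

(* A pairwise disjoint family of elements of [kappa]^sigma, indexed
   bijectively by I (so the family has cardinality |I|). *)
Definition disj_family (x0 : X) (I : Type) (F : I -> seg ltX x0 -> K) : Prop :=
  (forall i, incr (F i)) /\
  (forall i j, i <> j -> forall s t, F i s <> F j t) /\
  (forall i j, (forall k, (exists s, F i s = k) <-> (exists s, F j s = k)) -> i = j).

Definition below (x0 : X) (a b : seg ltX x0 -> K) : Prop :=
  forall s t, ltK (a s) (b t).

(* Partitions [kappa]^2 -> L are functions K -> K -> L (only values at
   alpha < beta matter). *)
Definition pr1 (p : K -> K -> L) : Prop :=
  exists c : K -> K -> Theta,
  forall (x0 : X) (A : K -> seg ltX x0 -> K), disj_family A ->
  forall tau : L -> Theta,
  exists i j, below (A i) (A j) /\
    forall s t, c (A i s) (A j t) = tau (p (A i s) (A j t)).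

Definition pr0 (p : K -> K -> L) : Prop :=
  exists c : K -> K -> Theta,
  forall (x0 : X) (A : K -> seg ltX x0 -> K), disj_family A ->
  forall tau : seg ltX x0 -> seg ltX x0 -> L -> Theta,
  exists i j, below (A i) (A j) /\
    forall s t, c (A i s) (A j t) = tau s t (p (A i s) (A j t)).

Definition pr1_circ (N N' : Type) (p : K -> K -> L) : Prop :=
  exists c : K -> K -> Theta,
  forall (x0 : X) (A : N -> seg ltX x0 -> K) (B : K -> seg ltX x0 -> K),
  disj_family A -> disj_family B ->
  exists g : N' -> N, injective_fun g /\
  forall tau : L -> Theta,
  exists n k, below (A (g n)) (B k) /\
    forall s t, c (A (g n) s) (B k t) = tau (p (A (g n) s) (B k t)).

Definition pr0_circ (N N' : Type) (p : K -> K -> L) : Prop :=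
  exists c : K -> K -> Theta,
  forall (x0 : X) (A : N -> seg ltX x0 -> K) (B : K -> seg ltX x0 -> K),
  disj_family A -> disj_family B ->
  exists g : N' -> N, injective_fun g /\
  forall tau : seg ltX x0 -> seg ltX x0 -> L -> Theta,
  exists n k, below (A (g n)) (B k) /\
    forall s t, c (A (g n) s) (B k t) = tau s t (p (A (g n) s) (B k t)).

End Principles.

Definition injective_fibers (K : Type) (ltK : K -> K -> Prop) (L : Type)
  (p : K -> K -> L) : Prop :=
  forall a a' b, ltK a a' -> ltK a' b -> p a b <> p a' b.

(* Fix an injection pi : lambda x lambda -> lambda and, for each beta < lambda^+,
   an injection e_beta : beta -> lambda.  Then pbar(alpha, beta) :=
   pi(p(alpha, beta), e_beta(alpha)) has injective fibers and p = h o pbar with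
   h := fst o pi^-1.  A colouring c witnessing a principle for pbar witnesses it
   for p: the colour map tau for p is answered by c with the colour map tau o h.
   The injection pi exists because lambda x lambda ~ lambda for every infinite
   well-orderable lambda, proved along Hessenberg's argument: by induction on g,
   (omega + g)^2 injects into omega + g, comparing omega + g with the Goedel
   (max-then-lexicographic) well-order of its square. *)

From Stdlib Require Import Classical ClassicalEpsilon FunctionalExtensionality
  ProofIrrelevance Relations Wellfounded Arith Cantor Lia.

Lemma proj1_sig_inj {A : Type} {P : A -> Prop} (u v : sig P) :
  proj1_sig u = proj1_sig v -> u = v.
Proof. apply eq_sig_hprop; intros; apply proof_irrelevance. Qed.

Lemma injects_id (A : Type) : injects A A.
Proof. exists (fun a => a); intros x y E; exact E. Qed.

Lemma injects_trans {A B C : Type} : injects A B -> injects B C -> injects A C.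
Proof. intros [f Hf] [g Hg]; exists (fun a => g (f a)); intros x y E; auto. Qed.

Lemma injects_prod {A B C D : Type} :
  injects A B -> injects C D -> injects (A * C) (B * D).
Proof.
  intros [f Hf] [g Hg]; exists (fun x => (f (fst x), g (snd x))).
  intros [a c] [a' c'] E; injection E as Ea Ec; f_equal; auto.
Qed.

Lemma injects_sum {A B C D : Type} :
  injects A B -> injects C D -> injects (A + C) (B + D).
Proof.
  intros [f Hf] [g Hg].
  exists (fun x => match x with inl a => inl (f a) | inr c => inr (g c) end).
  intros [a|c] [a'|c'] E; inversion E; f_equal; auto.
Qed.

Lemma injects_sig {A : Type} (P : A -> Prop) : injects (sig P) A.
Proof. exists (@proj1_sig _ P); exact proj1_sig_inj. Qed.

Lemma injects_inl (A B : Type) : injects A (A + B).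
Proof. exists inl; intros x y E; injection E; auto. Qed.

Lemma injects_inr (A B : Type) : injects B (A + B).
Proof. exists inr; intros x y E; injection E; auto. Qed.

Lemma injects_nat_square : injects (nat * nat) nat.
Proof. exists to_nat; exact to_nat_inj. Qed.

(* Hilbert's hotel: [inl k] goes to room [2k], a guest in room [j] moves to [2j+1]. *)
Lemma injects_nat_sum {B : Type} : injects nat B -> injects (nat + B) B.
Proof.
  intros [n Hn].
  set (shift := fun b =>
    match excluded_middle_informative (exists j, n j = b) with
    | left H => n (S (2 * proj1_sig (constructive_indefinite_description _ H)))
    | right _ => b
    end).
  assert (Hshift : forall b, (exists j, n j = b /\ shift b = n (S (2 * j))) \/
                             ((forall j, n j <> b) /\ shift b = b)).
  { intro b; unfold shift; destruct excluded_middle_informative as [H|H].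
    - left; destruct constructive_indefinite_description as [j Hj]; eauto.
    - right; split; [intros j Ej; apply H; eauto | reflexivity]. }
  exists (fun x => match x with inl k => n (2 * k) | inr b => shift b end).
  intros [k|b] [k'|b'] E.
  - apply Hn in E; f_equal; lia.
  - destruct (Hshift b') as [[j [<- Ej]]|[Hb' Eb']]; rewrite ?Ej, ?Eb' in E.
    + apply Hn in E; lia.
    + exfalso; exact (Hb' _ E).
  - destruct (Hshift b) as [[j [<- Ej]]|[Hb Eb]]; rewrite ?Ej, ?Eb in E.
    + apply Hn in E; lia.
    + exfalso; exact (Hb _ (eq_sym E)).
  - f_equal.
    destruct (Hshift b) as [[j [<- Ej]]|[Hb Eb]], (Hshift b') as [[j' [<- Ej']]|[Hb' Eb']];
      rewrite ?Ej, ?Eb, ?Ej', ?Eb' in E.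
    + apply Hn in E; f_equal; lia.
    + exfalso; exact (Hb' _ E).
    + exfalso; exact (Hb _ (eq_sym E)).
    + exact E.
Qed.

Lemma injective_left_inverse {A B : Type} (a0 : A) (f : A -> B) :
  injective_fun f -> exists g : B -> A, forall x, g (f x) = x.
Proof.
  intro Hf; exists (fun y => epsilon (inhabits a0) (fun x => f x = y)).
  intro x; apply Hf, (epsilon_spec (inhabits a0) (fun x' => f x' = f x)); eauto.
Qed.

Lemma wf_greedy_fresh {A B : Type} (R : A -> A -> Prop) (b0 : B) :
  well_founded R ->
  exists h : A -> B, forall x,
    (exists b, forall y, R y x -> h y <> b) -> forall y, R y x -> h y <> h x.
Proof.
  intro wf.
  set (F := fun (x : A) (f : forall y, R y x -> B) =>
    match excluded_middle_informative (exists b, forall y (r : R y x), f y r <> b) with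
    | left H => proj1_sig (constructive_indefinite_description _ H)
    | right _ => b0
    end).
  assert (F_ext : forall x' (f g : forall y, R y x' -> B),
             (forall y r, f y r = g y r) -> F x' f = F x' g).
  { intros x' f g Hfg; replace g with f; [reflexivity|].
    apply functional_extensionality_dep; intro y'.
    apply functional_extensionality_dep; intro r'; apply Hfg. }
  exists (Fix wf (fun _ => B) F).
  intros x Hfresh y r.
  rewrite (Fix_eq wf (fun _ => B) F F_ext x).
  set (h := Fix wf (fun _ => B) F) in *.
  unfold F; destruct excluded_middle_informative as [H|H].
  - destruct constructive_indefinite_description as [b Hb]; exact (Hb y r).
  - exfalso; apply H; destruct Hfresh as [b Hb]; exists b; intros y' r'; exact (Hb y' r').
Qed.

Lemma wf_injects_or_injects_seg {A B : Type} (R : A -> A -> Prop) (b0 : B) :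
  well_founded R -> (forall x y, x <> y -> R x y \/ R y x) ->
  injects A B \/ exists a, injects B {y | R y a}.
Proof.
  intros wf tot.
  destruct (wf_greedy_fresh R b0 wf) as [h Hh].
  destruct (classic (forall x, exists b, forall y, R y x -> h y <> b)) as [Hall|Hstuck].
  - left; exists h; intros x y Exy.
    apply NNPP; intro ne.
    destruct (tot x y ne) as [r|r]; [apply (Hh y (Hall y) x r) | apply (Hh x (Hall x) y r)]; auto.
  - right; apply not_all_ex_not in Hstuck as [x Hx]; exists x.
    assert (Hcover : forall b, exists y, R y x /\ h y = b).
    { intro b; apply NNPP; intro Hn; apply Hx; exists b; intros y r Eb; apply Hn; eauto. }
    set (pre := fun b => constructive_indefinite_description _ (Hcover b)).
    exists (fun b => exist (fun y => R y x) (proj1_sig (pre b)) (proj1 (proj2_sig (pre b)))).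
    intros b b' E; injection E as E.
    rewrite <- (proj2 (proj2_sig (pre b))), <- (proj2 (proj2_sig (pre b'))), E; reflexivity.
Qed.

Section Hessenberg.
Context {K : Type} (ltK : K -> K -> Prop).
Hypothesis WO : well_order ltK.

Definition seg_lt (g : K) (s t : seg ltK g) : Prop := ltK (proj1_sig s) (proj1_sig t).

(* [oseg g] is the ordinal omega + g: the omega summand makes it infinite even
   when [g] is finite, so Hessenberg's argument runs uniformly over all [g]. *)
Definition oseg (g : K) : Type := (nat + seg ltK g)%type.

Definition oseg_lt (g : K) : oseg g -> oseg g -> Prop :=
  le_AsB nat (seg ltK g) lt (seg_lt g).

Definition oseg_le (g : K) (x y : oseg g) : Prop := oseg_lt g x y \/ x = y.

Lemma oseg_lt_wf (g : K) : well_founded (oseg_lt g).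
Proof.
  apply wf_disjoint_sum; [exact lt_wf|].
  exact (wf_inverse_image _ _ ltK (@proj1_sig _ _) (wo_wf WO)).
Qed.

Lemma oseg_lt_total {g : K} (x y : oseg g) : oseg_lt g x y \/ x = y \/ oseg_lt g y x.
Proof.
  destruct x as [i|s], y as [j|t].
  - destruct (Nat.lt_trichotomy i j) as [h|[->|h]];
      [left | right; left | right; right]; try constructor; auto.
  - left; constructor.
  - right; right; constructor.
  - destruct (wo_total WO (proj1_sig s) (proj1_sig t)) as [h|[h|h]].
    + left; constructor; exact h.
    + right; left; f_equal; apply proj1_sig_inj; exact h.
    + right; right; constructor; exact h.
Qed.

Lemma oseg_lt_trans {g : K} (x y z : oseg g) :
  oseg_lt g x y -> oseg_lt g y z -> oseg_lt g x z.
Proof.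
  intros h1 h2; inversion h1; subst; inversion h2; subst; constructor;
    unfold seg_lt in *; pose proof (wo_trans WO); eauto using Nat.lt_trans.
Qed.

Lemma oseg_le_trans {g : K} (x y z : oseg g) :
  oseg_le g x y -> oseg_le g y z -> oseg_le g x z.
Proof. intros [h1|<-] [h2|<-]; unfold oseg_le; eauto using oseg_lt_trans. Qed.

Definition oseg_max {g : K} (x : oseg g * oseg g) : oseg g :=
  if excluded_middle_informative (oseg_lt g (fst x) (snd x)) then snd x else fst x.

Lemma oseg_max_ub {g : K} (x : oseg g * oseg g) :
  oseg_le g (fst x) (oseg_max x) /\ oseg_le g (snd x) (oseg_max x).
Proof.
  unfold oseg_max, oseg_le; destruct excluded_middle_informative as [h|h]; auto.
  destruct (oseg_lt_total (fst x) (snd x)) as [h'|[->|h']]; tauto.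
Qed.

Definition godel_lt (g : K) (x y : oseg g * oseg g) : Prop :=
  slexprod _ _ (oseg_lt g) (slexprod _ _ (oseg_lt g) (oseg_lt g))
    (oseg_max x, x) (oseg_max y, y).

Lemma godel_lt_wf (g : K) : well_founded (godel_lt g).
Proof.
  apply (wf_inverse_image _ _ _ (fun x => (oseg_max x, x))).
  apply wf_slexprod; [|apply wf_slexprod]; apply oseg_lt_wf.
Qed.

Lemma godel_lt_total (g : K) (x y : oseg g * oseg g) :
  x <> y -> godel_lt g x y \/ godel_lt g y x.
Proof.
  intro ne; unfold godel_lt.
  destruct (oseg_lt_total (oseg_max x) (oseg_max y)) as [h|[h|h]].
  - left; constructor 1; exact h.
  - rewrite h; destruct x as [a b], y as [c d].
    destruct (oseg_lt_total a c) as [h1|[<-|h1]].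
    + left; constructor 2; constructor 1; exact h1.
    + destruct (oseg_lt_total b d) as [h2|[<-|h2]].
      * left; constructor 2; constructor 2; exact h2.
      * congruence.
      * right; constructor 2; constructor 2; exact h2.
    + right; constructor 2; constructor 1; exact h1.
  - right; constructor 1; exact h.
Qed.

Definition oseg_cl {g : K} (m : oseg g) : Type := {y : oseg g | oseg_le g y m}.

Lemma godel_pred_injects {g : K} (x : oseg g * oseg g) :
  injects {y | godel_lt g y x} (oseg_cl (oseg_max x) * oseg_cl (oseg_max x)).
Proof.
  assert (Hbound : forall y, godel_lt g y x ->
            oseg_le g (fst y) (oseg_max x) /\ oseg_le g (snd y) (oseg_max x)).
  { intros y h; destruct (oseg_max_ub y) as [h1 h2]; unfold godel_lt in h.
    remember (oseg_max y, y) as u eqn:Hu; remember (oseg_max x, x) as v eqn:Hv.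
    destruct h as [m m' y' x' r | m y' x' r]; injection Hu as -> ->; injection Hv as Hm ->; rewrite <- Hm.
    - split; eapply oseg_le_trans; eauto; left; exact r.
    - auto. }
  exists (fun y => (exist _ (fst (proj1_sig y)) (proj1 (Hbound _ (proj2_sig y))),
                    exist _ (snd (proj1_sig y)) (proj2 (Hbound _ (proj2_sig y))))).
  intros [[a b] p] [[c d] q] E; injection E as Ea Eb; apply proj1_sig_inj; simpl; congruence.
Qed.

Lemma oseg_cl_inl_injects {g : K} (k : nat) : injects (oseg_cl (inl k : oseg g)) nat.
Proof.
  exists (fun y => match proj1_sig y with inl j => j | inr _ => 0 end).
  assert (Hnat : forall y, oseg_le g y (inl k) -> exists j, y = inl j).
  { intros [j|s] [h|h]; eauto; inversion h. }
  intros [y p] [y' q] E; simpl in E; apply proj1_sig_inj; simpl.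
  destruct (Hnat y p) as [j ->], (Hnat y' q) as [j' ->]; congruence.
Qed.

Lemma oseg_cl_inr_injects {g : K} (a : seg ltK g) :
  injects (oseg_cl (inr a : oseg g)) (oseg (proj1_sig a)).
Proof.
  exists (fun y => match proj1_sig y with
    | inl j => inl (S j)
    | inr s => match excluded_middle_informative (ltK (proj1_sig s) (proj1_sig a)) with
               | left h => inr (exist _ (proj1_sig s) h)
               | right _ => inl 0
               end
    end).
  assert (Htop : forall s, oseg_le g (inr s) (inr a) ->
                   ~ ltK (proj1_sig s) (proj1_sig a) -> s = a).
  { intros s [h|h] n; [inversion h; contradiction | congruence]. }
  intros [[i|s] p] [[j|t] q] E; simpl in E; apply proj1_sig_inj; simpl.
  - congruence.
  - destruct excluded_middle_informative; discriminate.
  - destruct excluded_middle_informative; discriminate.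
  - destruct excluded_middle_informative as [h|h], excluded_middle_informative as [h'|h'];
      try discriminate.
    + injection E as E; f_equal; apply proj1_sig_inj; exact E.
    + rewrite (Htop s p h), (Htop t q h'); reflexivity.
Qed.

Lemma oseg_mono {d g : K} : ltK d g -> injects (oseg d) (oseg g).
Proof.
  intro h; apply injects_sum; [apply injects_id|].
  exists (fun s => exist _ (proj1_sig s) (wo_trans WO _ _ _ (proj2_sig s) h)).
  intros s t E; injection E as E; apply proj1_sig_inj; exact E.
Qed.

Lemma oseg_absorb {d g : K} : injects (seg ltK g) (oseg d) -> injects (oseg g) (oseg d).
Proof.
  intro Hg; apply (injects_trans (injects_sum (injects_id nat) Hg)).
  apply injects_nat_sum, injects_inl.
Qed.

Theorem oseg_square_injects (g : K) : injects (oseg g * oseg g) (oseg g).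
Proof.
  induction g as [g IH] using (well_founded_induction (wo_wf WO)).
  destruct (classic (exists d, ltK d g /\ injects (seg ltK g) (oseg d)))
    as [[d [hd Hd]]|Hnew].
  - apply (injects_trans (injects_prod (oseg_absorb Hd) (oseg_absorb Hd))).
    exact (injects_trans (IH d hd) (oseg_mono hd)).
  - destruct (wf_injects_or_injects_seg (godel_lt g) (inl 0 : oseg g) (godel_lt_wf g) (@godel_lt_total g))
      as [H|[x Hx]]; [exact H|].
    pose proof (injects_trans Hx (godel_pred_injects x)) as Hcl.
    destruct (oseg_max x) as [k|a].
    + assert (Hnat : injects (oseg g) nat).
      { apply (injects_trans Hcl), (injects_trans (injects_prod
          (oseg_cl_inl_injects k) (oseg_cl_inl_injects k))), injects_nat_square. }
      apply (injects_trans (injects_prod Hnat Hnat)), (injects_trans injects_nat_square).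
      apply injects_inl.
    + exfalso; apply Hnew; exists (proj1_sig a); split; [exact (proj2_sig a)|].
      apply (injects_trans (injects_inr nat _)), (injects_trans Hcl).
      apply (injects_trans (injects_prod (oseg_cl_inr_injects a) (oseg_cl_inr_injects a))).
      exact (IH _ (proj2_sig a)).
Qed.

End Hessenberg.

Lemma successor_square_injects {L K : Type} (ltK : K -> K -> Prop) :
  is_successor_of L ltK -> injects (L * L) L.
Proof.
  intros [WO [HnatL [Hseg HKL]]].
  pose proof HnatL as [n _].
  assert (tot : forall x y, x <> y -> ltK x y \/ ltK y x).
  { intros x y ne; destruct (wo_total WO x y) as [h|[h|h]]; tauto. }
  destruct (wf_injects_or_injects_seg ltK (n 0) (wo_wf WO) tot) as [HK|[b HLb]];
    [contradiction|].
  assert (Hb : injects (oseg ltK b) (seg ltK b)).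
  { apply injects_nat_sum, (injects_trans HnatL HLb). }
  apply (injects_trans (injects_prod HLb HLb)),
    (injects_trans (injects_prod (injects_inr nat _) (injects_inr nat _))),
    (injects_trans (oseg_square_injects ltK WO b)), (injects_trans Hb), Hseg.
Qed.

Lemma seg_codes {K L : Type} (ltK : K -> K -> Prop) (l0 : L) :
  (forall b, injects (seg ltK b) L) ->
  exists e : K -> K -> L, forall b a a', ltK a b -> ltK a' b -> e b a = e b a' -> a = a'.
Proof.
  intro Hseg.
  set (code := fun b => constructive_indefinite_description _ (Hseg b)).
  exists (fun b a => match excluded_middle_informative (ltK a b) with
                     | left h => proj1_sig (code b) (exist _ a h)
                     | right _ => l0
                     end).
  intros b a a' h h' E.
  destruct excluded_middle_informative as [r|]; [|contradiction].
  destruct excluded_middle_informative as [r'|]; [|contradiction].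
  apply (proj2_sig (code b)) in E; injection E; auto.
Qed.

Lemma refinement_with_injective_fibers {K L : Type} (ltK : K -> K -> Prop) (l0 : L) :
  well_order ltK -> injects (L * L) L -> (forall b, injects (seg ltK b) L) ->
  forall p : K -> K -> L, exists (pbar : K -> K -> L) (h : L -> L),
    injective_fibers ltK pbar /\ forall a b, p a b = h (pbar a b).
Proof.
  intros WO [pi Hpi] Hseg p.
  destruct (seg_codes ltK l0 Hseg) as [e He].
  destruct (injective_left_inverse (l0, l0) pi Hpi) as [unpi Hunpi].
  exists (fun a b => pi (p a b, e b a)), (fun z => fst (unpi z)); split.
  - intros a a' b h h' E; apply Hpi in E; injection E as _ E.
    apply He in E; [subst a'; exact (wo_irrefl WO _ h) | exact (wo_trans WO _ _ _ h h') | exact h'].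
  - intros a b; rewrite Hunpi; reflexivity.
Qed.

Section Coarsening.
Variables (K : Type) (ltK : K -> K -> Prop) (L M : Type)
          (X : Type) (ltX : X -> X -> Prop) (Theta N N' : Type).
Variables (p : K -> K -> L) (pbar : K -> K -> M) (h : M -> L).
Hypothesis p_factors : forall a b, p a b = h (pbar a b).

Lemma pr1_coarsen : pr1 ltK ltX Theta pbar -> pr1 ltK ltX Theta p.
Proof.
  intros [c Hc]; exists c; intros x0 A HA tau.
  destruct (Hc x0 A HA (fun m => tau (h m))) as [i [j [Hij Hcol]]].
  exists i, j; split; [exact Hij|]; intros s t; rewrite p_factors; apply Hcol.
Qed.

Lemma pr0_coarsen : pr0 ltK ltX Theta pbar -> pr0 ltK ltX Theta p.
Proof.
  intros [c Hc]; exists c; intros x0 A HA tau.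
  destruct (Hc x0 A HA (fun s t m => tau s t (h m))) as [i [j [Hij Hcol]]].
  exists i, j; split; [exact Hij|]; intros s t; rewrite p_factors; apply Hcol.
Qed.

Lemma pr1_circ_coarsen :
  pr1_circ ltK ltX Theta N N' pbar -> pr1_circ ltK ltX Theta N N' p.
Proof.
  intros [c Hc]; exists c; intros x0 A B HA HB.
  destruct (Hc x0 A B HA HB) as [g [Hg HAB]]; exists g; split; [exact Hg|]; intro tau.
  destruct (HAB (fun m => tau (h m))) as [i [j [Hij Hcol]]].
  exists i, j; split; [exact Hij|]; intros s t; rewrite p_factors; apply Hcol.
Qed.

Lemma pr0_circ_coarsen :
  pr0_circ ltK ltX Theta N N' pbar -> pr0_circ ltK ltX Theta N N' p.
Proof.
  intros [c Hc]; exists c; intros x0 A B HA HB.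
  destruct (Hc x0 A B HA HB) as [g [Hg HAB]]; exists g; split; [exact Hg|]; intro tau.
  destruct (HAB (fun s t m => tau s t (h m))) as [i [j [Hij Hcol]]].
  exists i, j; split; [exact Hij|]; intros s t; rewrite p_factors; apply Hcol.
Qed.

End Coarsening.

Theorem proposition2p6 :
  forall (L K : Type) (ltK : K -> K -> Prop),
  is_successor_of L ltK ->
  forall p : K -> K -> L,
  exists pbar : K -> K -> L,
    injective_fibers ltK pbar /\
    forall (Theta : Type) (X : Type) (ltX : X -> X -> Prop) (N N' : Type),
      is_initial ltX ->
      (pr1 ltK ltX Theta pbar -> pr1 ltK ltX Theta p) /\
      (pr0 ltK ltX Theta pbar -> pr0 ltK ltX Theta p) /\
      (pr1_circ ltK ltX Theta N N' pbar -> pr1_circ ltK ltX Theta N N' p) /\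
      (pr0_circ ltK ltX Theta N N' pbar -> pr0_circ ltK ltX Theta N N' p).
Proof.
  intros L K ltK HK p.
  pose proof (successor_square_injects ltK HK) as Hsquare.
  destruct HK as [WO [[n _] [Hseg _]]].
  destruct (refinement_with_injective_fibers ltK (n 0) WO Hsquare Hseg p)
    as [pbar [h [Hfib Hp]]].
  exists pbar; split; [exact Hfib|].
  (* The transfer works for any index order, initial or not. *)
  intros Theta X ltX N N' _.
  repeat split.
  - apply pr1_coarsen with (h := h); exact Hp.
  - apply pr0_coarsen with (h := h); exact Hp.
  - apply pr1_circ_coarsen with (h := h); exact Hp.
  - apply pr0_circ_coarsen with (h := h); exact Hp.
Qed.
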